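(* For every $k\in[n]$ and every signaling scheme $\mathcal{Z}'$ for $\mathcal{D}$, \[\int_0^{F_{\mathcal{D}}(v_k)} s_{\mathcal{Z}'}(x)\,dx\ \le\ V_k-\max_{i\in[k]}\Big\{v_i\sum_{j=i}^k f_{\mathcal{D}}(v_j)\Big\},\qquad\text{where } V_k=\sum_{i=1}^k v_i f_{\mathcal{D}}(v_i).\]
   Context: Values and prior. $0<v_1<\dots<v_n$ are reals, and $v_0:=0$. $\mathcal{D}$ is a distribution on $\{v_1,\dots,v_n\}$ with $f_{\mathcal{D}}(v_i)>0$ and CDF $F_{\mathcal{D}}$. Signals and pricing. A signal is a distribution $S$ on these values, with $G_S(p)=\Pr_{v\sim S}[v\ge p]$. The seller posts $p^*_S$, the smallest $v$ in the support of $S$ maximizing $v\,G_S(v)$. The surplus of value $v$ is $cs_v(S)=\mathbb{1}[v\ge p^*_S](v-p^*_S)$. Signaling schemes. A signaling scheme is $\mathcal{Z}=\{(S_q,\gamma_q)\}_{q\in[Q]}$ with $\gamma_q\ge0$, $\sum\gamma_q=1$ and $\sum_q\gamma_q f_{S_q}=f_{\mathcal{D}}$. Its expected consumer surplus at $v_i$ is $cs_{v_i}(\mathcal{Z})=\sum_q cs_{v_i}(S_q)\gamma_q f_{S_q}(v_i)/f_{\mathcal{D}}(v_i)$. The surplus-mass function $s_{\mathcal{Z}}$ on $(0,1]$ equals $cs_{v_i}(\mathcal{Z})$ on $(F_{\mathcal{D}}(v_{i-1}),F_{\mathcal{D}}(v_i)]$. In particular, $\int_0^{F_{\mathcal{D}}(v_k)}s_{\mathcal{Z}}=\sum_{i\le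 k}f_{\mathcal{D}}(v_i)\,cs_{v_i}(\mathcal{Z})$. *)

From HB Require Import structures.
From mathcomp Require Import all_boot all_order all_algebra.
Set Implicit Arguments. Unset Strict Implicit. Unset Printing Implicit Defensive.
Import Order.TTheory GRing.Theory Num.Theory.
Local Open Scope ring_scope.

(* Values v_1 < ... < v_n are represented by v : 'I_n -> R
   (ordinal i stands for the paper's index i+1).  A distribution on the
   values (the prior D, or a signal S) is a mass function 'I_n -> R. *)

Section Pricing.
Variables (R : realFieldType) (n : nat) (v : 'I_n -> R).

(* G_S(p) = Pr_{v ~ S}[v >= p], evaluated at p = v_i *)
Definition G (S : 'I_n -> R) (i : 'I_n) : R := \sum_(j | v i <= v j) S j.

Definition rev (S : 'I_n -> R) (i : 'I_n) : R := v i * G S i.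

Definition is_opt (S : 'I_n -> R) (i : 'I_n) : bool :=
  (0 < S i) && [forall j : 'I_n, (0 < S j) ==> (rev S j <= rev S i)].

(* the index of p*_S: the smallest (equivalently, since v is increasing,
   the one with the smallest value) support point maximizing revenue *)
Definition price_idx (S : 'I_n -> R) : option 'I_n :=
  [pick i | is_opt S i && [forall j : 'I_n, (j < i)%N ==> ~~ is_opt S j]].

Definition cs (S : 'I_n -> R) (i : 'I_n) : R :=
  match price_idx S with
  | Some p => if v p <= v i then v i - v p else 0
  | None => 0
  end.

Definition is_distr (f : 'I_n -> R) : Prop :=
  (forall i, 0 <= f i) /\ \sum_i f i = 1.

Definition is_scheme (D : 'I_n -> R) (Q : nat)
    (S : 'I_Q -> 'I_n -> R) (gam : 'I_Q -> R) : Prop :=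
  (forall q, is_distr (S q)) /\ (forall q, 0 <= gam q) /\
  \sum_q gam q = 1 /\ (forall i, \sum_q gam q * S q i = D i).

Definition cs_scheme (D : 'I_n -> R) (Q : nat)
    (S : 'I_Q -> 'I_n -> R) (gam : 'I_Q -> R) (i : 'I_n) : R :=
  \sum_q cs (S q) i * gam q * S q i / D i.

(* int_0^{F_D(v_k)} s_Z(x) dx, for the step function s_Z which equals
   cs_{v_i}(Z) on (F_D(v_{i-1}), F_D(v_i)] (an interval of length f_D(v_i)) *)
Definition surplus_integral (D : 'I_n -> R) (Q : nat)
    (S : 'I_Q -> 'I_n -> R) (gam : 'I_Q -> R) (k : 'I_n) : R :=
  \sum_(i : 'I_n | (i <= k)%N) D i * cs_scheme D S gam i.

Definition Vk (D : 'I_n -> R) (k : 'I_n) : R :=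
  \sum_(i : 'I_n | (i <= k)%N) v i * D i.

(* max_{i in [k]} v_i * sum_{j=i}^k f_D(v_j)  (all terms are positive,
   so 0 is a harmless neutral element for the max) *)
Definition maxterm (D : 'I_n -> R) (k : 'I_n) : R :=
  \big[Num.max/0]_(i : 'I_n | (i <= k)%N)
     (v i * \sum_(j : 'I_n | (i <= j <= k)%N) D j).

End Pricing.

From HB Require Import structures.
From mathcomp Require Import all_boot all_order all_algebra.
From mathcomp Require Import ring lra.
Set Implicit Arguments. Unset Strict Implicit. Unset Printing Implicit Defensive.
Import Order.TTheory GRing.Theory Num.Theory.
Local Open Scope ring_scope.

(* For a single signal S, the mass that the values v_m, ..., v_k keep out of
   the buyer's surplus is at least v_m times their mass: either the price is
   above v_m, and each of them loses at least v_m, or it is some v_p <= v_m,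
   and then they lose v_p each, while optimality of the price gives
   v_m G_S(v_m) <= v_p G_S(v_p), i.e. v_m (mass of [v_m, v_k]) is at most
   v_p (mass of [v_p, v_k]) after cancelling the common tail above v_k.
   Both V_k - \int s_Z and v_m (mass of [v_m, v_k] under D) are linear in the
   decomposition D = sum_q gamma_q S_q, so the bound averages to the scheme. *)

Definition window {V : nmodType} {n : nat} (f : 'I_n -> V) (l k : 'I_n) : V :=
  \sum_(j : 'I_n | (l <= j <= k)%N) f j.

Section Signal.
Variables (R : realFieldType) (n : nat) (v : 'I_n -> R).
Hypothesis v_pos : forall i, 0 < v i.
Hypothesis v_incr : forall i j : 'I_n, (i < j)%N -> v i < v j.

Lemma le_v i j : (v i <= v j) = (i <= j)%N.
Proof.
case: (ltngtP i j) => [ij | ji | /val_inj ->]; last exact: lexx.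
- by rewrite ltW ?v_incr.
- by apply/negbTE; rewrite -ltNge v_incr.
Qed.

Lemma G_tail S i : G v S i = \sum_(j : 'I_n | (i <= j)%N) S j.
Proof. by apply: eq_bigl => j; rewrite le_v. Qed.

Lemma G_split S (l k : 'I_n) : (l <= k)%N ->
  G v S l = window S l k + \sum_(j : 'I_n | (k < j)%N) S j.
Proof.
move=> lk; rewrite G_tail /window (bigID (fun j : 'I_n => (j <= k)%N)) /=.
congr (_ + _); apply: eq_bigl => j.
by rewrite -ltnNge andb_idl // => /ltnW; exact: leq_trans lk.
Qed.

Lemma G_skip_null S (m j : 'I_n) : (m <= j)%N ->
  (forall i : 'I_n, (m <= i < j)%N -> S i = 0) -> G v S m = G v S j.
Proof.
move=> mj null; rewrite !G_tail (bigID (fun i : 'I_n => (j <= i)%N)) /=.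
rewrite [X in _ + X]big1 ?addr0 => [|i /andP[mi]]; last first.
  by rewrite -ltnNge => ij; apply: null; rewrite mi.
by apply: eq_bigl => i; rewrite andb_idl // => /(leq_trans mj).
Qed.

Section Price.
Variables (S : 'I_n -> R) (p : 'I_n).
Hypothesis S_ge0 : forall i, 0 <= S i.
Hypothesis price_p : price_idx v S = Some p.

Lemma price_idx_opt : is_opt v S p.
Proof.
by move: price_p; rewrite /price_idx; case: pickP => // i /andP[? _] [<-].
Qed.

(* The revenue is maximized over the support only; off the support G is
   constant up to the next support point, or 0 past the last one. *)
Lemma rev_le_price (m : 'I_n) : v m * G v S m <= v p * G v S p.
Proof.
have /andP[_ /forallP opt] := price_idx_opt.
pose supp_above (j : 'I_n) := (m <= j)%N && (0 < S j).
have [j0 j0P | no_supp] := pickP supp_above; last first.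
  rewrite G_tail big1 ?mulr0 => [|i mi]; last first.
    apply/eqP; rewrite eq_le S_ge0 andbT leNgt.
    by move: (no_supp i); rewrite /supp_above mi /= => ->.
  by apply: mulr_ge0; [exact: ltW | exact: sumr_ge0].
case: (arg_minnP val j0P) => j /andP[mj Sj] jmin.
have G_mj : G v S m = G v S j.
  apply: G_skip_null => // i /andP[mi ij]; apply/eqP.
  rewrite eq_le S_ge0 andbT leNgt; apply: contraTN ij => Si.
  by rewrite -leqNgt jmin //; apply/andP.
apply: le_trans (implyP (opt j) Sj).
by rewrite G_mj ler_wpM2r ?le_v ?sumr_ge0.
Qed.

Lemma v_sub_cs_price i : v i - cs v S i = Num.min (v p) (v i).
Proof.
rewrite /cs price_p; case: leP => _; last exact: subr0.
by rewrite opprB addrC subrK.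
Qed.

End Price.

Lemma v_sub_cs_ge0 S i : 0 <= v i - cs v S i.
Proof.
case price_p: (price_idx v S) => [p|]; last by rewrite /cs price_p subr0 ltW.
by rewrite (v_sub_cs_price price_p) le_min !ltW.
Qed.

Definition surplus_gap (S : 'I_n -> R) (k : 'I_n) : R :=
  \sum_(i : 'I_n | (i <= k)%N) S i * (v i - cs v S i).

Section Gap.
Variable S : 'I_n -> R.
Hypothesis S_ge0 : forall i, 0 <= S i.

Lemma surplus_gap_ge0 k : 0 <= surplus_gap S k.
Proof. by apply: sumr_ge0 => i _; rewrite mulr_ge0 ?v_sub_cs_ge0. Qed.

Lemma surplus_gap_ge_window (c : R) (l k : 'I_n) :
  (forall i : 'I_n, (l <= i <= k)%N -> c <= v i - cs v S i) ->
  c * window S l k <= surplus_gap S k.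
Proof.
move=> c_le; rewrite /surplus_gap (bigID (fun i : 'I_n => (l <= i)%N)) /=.
apply: ler_wpDr; first by apply: sumr_ge0 => i _; rewrite mulr_ge0 ?v_sub_cs_ge0.
rewrite mulr_sumr; under [X in _ <= X]eq_bigl do rewrite andbC.
by apply: ler_sum => i lik; rewrite mulrC ler_wpM2l ?c_le.
Qed.

Lemma window_le_surplus_gap (m k : 'I_n) : (m <= k)%N ->
  v m * window S m k <= surplus_gap S k.
Proof.
move=> mk; case price_p: (price_idx v S) => [p|]; last first.
  by apply: surplus_gap_ge_window => i /andP[mi _]; rewrite /cs price_p subr0 le_v.
have [pm | mp] := leqP p m; last first.
  apply: surplus_gap_ge_window => i /andP[mi _].
  by rewrite (v_sub_cs_price price_p) le_min !le_v mi ltnW.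
apply: le_trans (surplus_gap_ge_window (l := p) (c := v p) _); last first.
  by move=> i /andP[pi _]; rewrite (v_sub_cs_price price_p) min_l // le_v.
have := rev_le_price S_ge0 price_p m.
rewrite (G_split _ mk) (G_split _ (leq_trans pm mk)).
set T := \sum_(j : 'I_n | (k < j)%N) S j.
have : v p * T <= v m * T by rewrite ler_wpM2r ?le_v ?sumr_ge0.
rewrite !mulrDr; lra.
Qed.

End Gap.
End Signal.

Section Scheme.
Variables (R : realFieldType) (n Q : nat) (D : 'I_n -> R).
Variables (S : 'I_Q -> 'I_n -> R) (gam : 'I_Q -> R).
Hypothesis D_mix : forall i, \sum_q gam q * S q i = D i.

Lemma window_mix (l k : 'I_n) : window D l k = \sum_q gam q * window (S q) l k.
Proof.
rewrite /window; under eq_bigr do rewrite -D_mix.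
by rewrite exchange_big; apply: eq_bigr => q _; rewrite mulr_sumr.
Qed.

Lemma Vk_sub_surplus_integral (v : 'I_n -> R) (k : 'I_n) :
  (forall i, D i != 0) ->
  Vk v D k - surplus_integral v D S gam k = \sum_q gam q * surplus_gap v (S q) k.
Proof.
move=> D_neq0; rewrite /Vk /surplus_integral /cs_scheme -sumrB.
under [RHS]eq_bigr do rewrite /surplus_gap mulr_sumr.
rewrite exchange_big; apply: eq_bigr => i _.
rewrite [X in _ - X]mulr_sumr -[X in v i * X]D_mix mulr_sumr -sumrB.
by apply: eq_bigr => q _; field; apply: D_neq0.
Qed.

End Scheme.

Theorem lemma3 (R : realFieldType) (n : nat) (v : 'I_n -> R) (D : 'I_n -> R)
  (v_pos : forall i, 0 < v i)
  (v_incr : forall i j : 'I_n, (i < j)%N -> v i < v j)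
  (D_pos : forall i, 0 < D i)
  (D_sum : \sum_i D i = 1)
  (k : 'I_n) (Q : nat) (S : 'I_Q -> 'I_n -> R) (gam : 'I_Q -> R)
  (hZ : is_scheme D S gam) :
  surplus_integral v D S gam k <= Vk v D k - maxterm v D k.
Proof.
case: hZ => S_distr [gam_ge0 [_ D_mix]].
have S_ge0 q : forall i, 0 <= S q i by case: (S_distr q).
have D_neq0 i : D i != 0 by exact: lt0r_neq0.
suff : maxterm v D k <= Vk v D k - surplus_integral v D S gam k by lra.
rewrite (Vk_sub_surplus_integral D_mix) //; apply: bigmax_le => [|m mk].
  apply: sumr_ge0 => q _.
  exact: mulr_ge0 (gam_ge0 q) (surplus_gap_ge0 v_pos (S_ge0 q) k).
rewrite -/(window D m k) (window_mix D_mix) mulr_sumr; apply: ler_sum => q _.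
by rewrite mulrCA ler_wpM2l ?(window_le_surplus_gap v_pos v_incr (S_ge0 q)).
Qed.
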